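(* Let $(D,D_{t'})$ be a proper pair (in the sense allowing contemporaneous effects) and let $A,C\subseteq V\cup W$ and $B\subseteq V$ be pairwise disjoint. Assume there are no tailed directed edges into $B$ in $D$. If $B$ is $\delta$-separated from $A$ given $C$ in $D$, then for every $0<t\le t'$, $\nu_t^B$ is $d$-separated from $\bar\nu_{t-1}^A$ given $\bar\nu_{t-1}^{B\cup C}$ in $D_{t'}$.
   Context: $V$, $W$ are finite disjoint sets ($W$ = baseline nodes). Tailed directed graph: graph on $V\cup W$ with directed edges $i\to j$ and tailed directed edges $i\bullet\!\!\to j$; $i\ast\!\!\to j$ means either. Only baseline nodes have edges into baseline nodes, and these are tailed. $D^-$ is the DG with $i\to j$ iff $i\ast\!\!\to j$ in $D$. DG terminology: path = walk without repeated nodes; collider = non-endpoint node with both adjacent edges pointing into it; $\mathrm{an}(C)$ = nodes with a directed path into $C$. $\delta$-separation in a DG $G$: with $G^B$ obtained by deleting all edges $i\to j$ with $i\in B$, $B$ is $\delta$-separated from $A$ given $C$ if every path in $G^B$ between $A$ and $B$ contains a noncollider in $C$ or a collider not in $\mathrm{an}_G(C)\cup C$; in a tailed directed graph $D$ this is applied to $D^-$. $d$-separation in a DAG: same blocking condition on paths of the DAG with no edge deletion. Unrolling: the unrolled version of $D$ on $t'$ lags is the DAG $D_{t'}$ on nodes $\bigcup_{i\in V}\{\nu_0^i,\dots,\nu_{t'}^i\}\cup\{\nu_0^i:i\in W\}$ with $\nu_s^i\to\nu_t^j$ if $s<t$ and $i\ast\!\!\to j$, and $\nu_t^i\to\nu_t^j$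 if $i\bullet\!\!\to j$. Rolling: the rolled version of a DAG $D_{t'}$ on such a node set has $i\ast\!\!\to j$ if $\nu_s^i\to\nu_t^j$ for some $s\le t$, and $i\bullet\!\!\to j$ iff $\nu_t^i\to\nu_t^j$ for some $t$. Standing assumption: if $\nu_t^i\to\nu_t^j$ is present then so is $\nu_s^i\to\nu_u^j$ for some $s<u$. $(D,D_{t'})$ is proper if $D$ is the rolled version of $D_{t'}$ or $D_{t'}$ is the unrolled version of $D$. $\nu_t^A=\{\nu_t^i:i\in A\}$, $\bar\nu_t^A=\{\nu_s^i:i\in A,s\le t\}$. *)

From mathcomp Require Import all_boot.
Set Implicit Arguments. Unset Strict Implicit. Unset Printing Implicit Defensive.

Section Walks.
Variable T : finType.

(* A walk from x is a start node x and a list of steps (b, y):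
   b = true  : the step uses an edge  x -> y   (forward),
   b = false : the step uses an edge  y -> x   (backward).
   Recording the orientation makes the walk determine its edges
   (a DG may contain both i -> j and j -> i). *)
Fixpoint is_walk (e : rel T) (x : T) (s : seq (bool * T)) : bool :=
  if s is (b, y) :: s' then (if b then e x y else e y x) && is_walk e y s'
  else true.

Definition walk_nodes (x : T) (s : seq (bool * T)) : seq T := x :: map snd s.
Definition walk_end (x : T) (s : seq (bool * T)) : T := last x (map snd s).

Definition is_path (e : rel T) (x : T) (s : seq (bool * T)) : bool :=
  is_walk e x s && uniq (walk_nodes x s).

Definition anc (e : rel T) (C : {set T}) : {set T} :=
  [set x | [exists c in C, connect e x c]].

(* blocked_tail C AnC bin x s: x is a non-endpoint node entered by a step
   of orientation bin (bin = true: previous -> x) and left by the first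
   step of s; returns true iff some non-endpoint node from x on is a
   noncollider in C or a collider not in AnC. *)
Fixpoint blocked_tail (C AnC : {set T}) (bin : bool) (x : T)
    (s : seq (bool * T)) : bool :=
  if s is (b, y) :: s' then
    (if bin && ~~ b (* both adjacent edges point into x: collider *)
     then x \notin AnC else x \in C) || blocked_tail C AnC b y s'
  else false (* x is the final endpoint *).

Definition blocked (C AnC : {set T}) (x : T) (s : seq (bool * T)) : bool :=
  if s is (b, y) :: s' then blocked_tail C AnC b y s' else false.

Definition sep_gen (ep ea : rel T) (A B C : {set T}) : Prop :=
  forall (x : T) (s : seq (bool * T)),
    is_path ep x s -> x \in A -> walk_end x s \in B ->
    blocked C (anc ea C :|: C) x s.

Definition d_separated (e : rel T) (A B C : {set T}) : Prop :=
  sep_gen e e A B C.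

(* delta-separation in a DG e: paths taken in e^B (edges out of B deleted),
   ancestors taken in e *)
Definition delta_separated (e : rel T) (A B C : {set T}) : Prop :=
  sep_gen [rel i j | e i j && (i \notin B)] e A B C.

End Walks.

(* Nodes V u W form the finite type N, W : {set N} are the baseline   *)
(* nodes, V = ~: W.  A tailed directed graph D is given by            *)
(*   E  i j  <->  i *-> j   (so D^- = E)                             *)
(*   Tl i j  <->  i .-> j   (tailed edge)                             *)
Section TimeSeries.
Variables (N : finType) (W : {set N}) (tp : nat).

(* unrolled nodes nu_t^i, t in {0..tp}; only (i,0) is a node for i in W *)
Definition node : finType := (N * 'I_tp.+1)%type.
Definition valid (u : node) : bool := (u.1 \notin W) || (val u.2 == 0%N).

Definition is_TDG (E Tl : rel N) : Prop :=
  (forall i j, Tl i j -> E i j) /\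
  (forall i j, j \in W -> E i j -> (i \in W) && Tl i j).

Definition unrolled (E Tl : rel N) (G : rel node) : Prop :=
  forall u v : node,
    G u v = [&& valid u, valid v &
               ((val u.2 < val v.2) && E u.1 v.1)
               || ((val u.2 == val v.2) && Tl u.1 v.1)].

Definition rolled (G : rel node) (E Tl : rel N) : Prop :=
  forall i j : N,
    (E i j = [exists s : 'I_tp.+1, exists t : 'I_tp.+1,
                (val s <= val t) && G (i, s) (j, t)]) /\
    (Tl i j = [exists t : 'I_tp.+1, G (i, t) (j, t)]).

Definition acyclic (G : rel node) : Prop :=
  forall u v, G u v -> ~~ connect G v u.

Definition ts_dag (G : rel node) : Prop :=
  acyclic G /\
  (forall u v, G u v -> [&& valid u, valid v & val u.2 <= val v.2]).

(* standing assumption (for targets j in V, where it can be met) *)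
Definition standing (G : rel node) : Prop :=
  forall (i j : N) (t : 'I_tp.+1), j \notin W -> G (i, t) (j, t) ->
    exists s u : 'I_tp.+1, val s < val u /\ G (i, s) (j, u).

Definition proper_pair (E Tl : rel N) (G : rel node) : Prop :=
  [/\ is_TDG E Tl, ts_dag G, standing G & (rolled G E Tl \/ unrolled E Tl G)].

Definition nu (t : nat) (A : {set N}) : {set node} :=
  [set u : node | [&& u.1 \in A, val u.2 == t & valid u]].

Definition barnu (t : nat) (A : {set N}) : {set node} :=
  [set u : node | [&& u.1 \in A, val u.2 <= t & valid u]].

End TimeSeries.

From mathcomp Require Import all_boot.
Set Implicit Arguments. Unset Strict Implicit. Unset Printing Implicit Defensive.

(* Suppose a path of the unrolled DAG from barnu_(t-1)^A to nu_t^B is active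
   given Z = barnu_(t-1)^(B u C).  All its nodes but the last lie at times
   below t: after a later node the path could only move forward in time (a
   collider there is no ancestor of Z), so it would enter nu_t^B through a
   contemporaneous edge, and there are no tailed edges into B.  Dropping the
   time indices therefore gives a walk from A to B that is active given B u C
   and uses no edge out of B (the tail of such an edge would be a noncollider
   in Z).  Replacing each collider that is an ancestor of B but not of C by a
   directed path into B makes the walk active given C, and shortening it to a
   path contradicts the delta-separation of B from A given C. *)

Section ActiveWalks.
Variable T : finType.
Implicit Types (e ea : rel T) (B C AnC : {set T}) (x y : T) (s pre suf : seq (bool * T)).

Definition active_node C AnC (bin b : bool) x : bool :=
  if bin && ~~ b then x \in AnC else x \notin C.

Definition active_tail C AnC (bin : bool) x s : bool := ~~ blocked_tail C AnC bin x s.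

#[global] Arguments active_node : simpl never.
#[global] Arguments active_tail : simpl never.

Lemma active_tail_cons C AnC bin x b y s :
  active_tail C AnC bin x ((b, y) :: s) =
  active_node C AnC bin b x && active_tail C AnC b y s.
Proof.
by rewrite /active_tail /active_node /= negb_or; case: (bin && ~~ b); rewrite ?negbK.
Qed.

Lemma active_noncollider C AnC bin b x :
  ~~ (bin && ~~ b) -> active_node C AnC bin b x = (x \notin C).
Proof. by rewrite /active_node => /negbTE->. Qed.

Lemma active_tail_start C AnC x s :
  x \notin C -> active_tail C AnC false x s = ~~ blocked C AnC x s.
Proof. by case: s => [|[b y] s] // xC; rewrite active_tail_cons /active_node xC. Qed.

Lemma mem_anc e C x : x \in C -> x \in anc e C.
Proof. by move=> xC; rewrite inE; apply/existsP; exists x; rewrite xC connect0. Qed.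

Lemma anc_connect e C x y : connect e x y -> y \in anc e C -> x \in anc e C.
Proof.
move=> exy; rewrite !inE => /existsP[c /andP[cC ryc]].
by apply/existsP; exists c; rewrite cC (connect_trans exy ryc).
Qed.

Lemma anc_edge e C x y : e x y -> y \in anc e C -> x \in anc e C.
Proof. by move/connect1; apply: anc_connect. Qed.

Lemma walk_end_cat y pre suf :
  walk_end y (pre ++ suf) = walk_end (walk_end y pre) suf.
Proof. by rewrite /walk_end map_cat last_cat. Qed.

Lemma is_walk_catr e y pre suf :
  is_walk e y (pre ++ suf) -> is_walk e (walk_end y pre) suf.
Proof. by elim: pre y => [//|[b z] pre IH] y /= /andP[_ /IH]. Qed.

Lemma is_path_catr e y pre suf :
  is_path e y (pre ++ suf) -> is_path e (walk_end y pre) suf.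
Proof.
rewrite /is_path => /andP[/is_walk_catr->]; rewrite /walk_nodes map_cat -cat_cons cat_uniq.
case/and3P=> _ /hasPn end_suf u_suf /=; rewrite u_suf andbT.
by apply: contraL (mem_last y (map snd pre)) => /end_suf.
Qed.

Lemma active_tail_catr C AnC bin y pre suf :
  active_tail C AnC bin y (pre ++ suf) ->
  active_tail C AnC (last bin (map fst pre)) (walk_end y pre) suf.
Proof.
by elim: pre bin y => [//|[b z] pre IH] bin y; rewrite /= active_tail_cons => /andP[_ /IH].
Qed.

Lemma walk_nodes_split x y s : x \in walk_nodes y s ->
  exists pre suf, s = pre ++ suf /\ walk_end y pre = x.
Proof.
elim: s y => [|[b z] s IH] y; rewrite /walk_nodes /= in_cons.
  by rewrite orbF => /eqP->; exists [::], [::].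
case/orP=> [/eqP-> | /IH[pre [suf [-> <-]]]]; first by exists [::], ((b, z) :: s).
by exists ((b, z) :: pre), suf.
Qed.

Definition map_walk (T' : finType) (f : T -> T') s : seq (bool * T') :=
  [seq (p.1, f p.2) | p <- s].

Section Ancestors.
Variables (e ea : rel T) (C : {set T}).
Hypothesis e_ea : subrel e ea.
Let AnC := anc ea C :|: C.

(* Until its first backward step an active walk entered forward is a directed
   path, and the collider at that step lies in an(C) u C. *)
Lemma active_forward_anc y s :
  is_walk e y s -> active_tail C AnC true y s -> has (fun p => ~~ p.1) s ->
  y \in anc ea C.
Proof.
elim: s y => [//|[[] z] s IH] y /=; rewrite active_tail_cons.
  case/andP=> eyz w_zs /andP[_ act_zs] bwd_s.
  exact: anc_edge (e_ea eyz) (IH z w_zs act_zs bwd_s).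
by move=> _ /andP[]; rewrite /active_node /= inE => /orP[//|/(mem_anc ea)].
Qed.

Lemma active_tail_shortcut x bin b y pre suf :
  is_walk e x ((b, y) :: pre ++ suf) -> walk_end y pre = x ->
  active_tail C AnC bin x ((b, y) :: pre ++ suf) -> active_tail C AnC bin x suf.
Proof.
move=> /= /andP[exy w_ys] end_x; rewrite active_tail_cons => /andP[act_x act_ys].
have := active_tail_catr act_ys; rewrite end_x.
case: suf w_ys act_ys => [|[b' z] suf] // w_ys act_ys.
rewrite !active_tail_cons => /andP[act_x' ->]; rewrite andbT.
set bi := last b (map fst pre) in act_x'.
have x_anc : b -> ~~ bi -> x \in AnC.
  move=> b_fwd bi_bwd; rewrite inE; apply/orP; left.
  move: exy act_ys; rewrite b_fwd => exy act_ys.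
  apply: anc_edge (e_ea exy) (active_forward_anc w_ys act_ys _).
  have : false \in b :: map fst pre by rewrite -(negbTE bi_bwd) mem_last.
  rewrite in_cons b_fwd /= => bwd_pre.
  by rewrite has_cat -(has_map fst negb); apply/orP; left; apply/hasP; exists false.
move: act_x act_x' x_anc; rewrite /active_node.
by case: bin (b) (b') (bi) => [] [] [] [] //= _ _; apply.
Qed.

Lemma active_path_of_walk B x bin s :
  is_walk e x s -> walk_end x s \in B -> active_tail C AnC bin x s ->
  exists s', [/\ is_path e x s', walk_end x s' \in B & active_tail C AnC bin x s'].
Proof.
elim: s x bin => [|[b y] s IH] x bin; first by exists [::].
move=> /= /andP[exy w_ys] end_B; rewrite active_tail_cons => /andP[act_x act_ys].
have [s1 [p_ys1 end_B1 act_ys1]] := IH y b w_ys end_B act_ys.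
have [x_ys1 | x_nys1] := boolP (x \in walk_nodes y s1); last first.
  exists ((b, y) :: s1); split=> //; last by rewrite active_tail_cons act_x.
  case/andP: p_ys1 => w_ys1 u_ys1.
  by rewrite /is_path /= exy w_ys1 /walk_nodes /= x_nys1.
have [pre [suf [def_s1 end_x]]] := walk_nodes_split x_ys1.
exists suf; split.
- by rewrite -end_x; apply: is_path_catr; rewrite -def_s1.
- by rewrite -end_x -walk_end_cat -def_s1.
apply: (@active_tail_shortcut x bin b y pre suf _ end_x); rewrite -def_s1.
  by rewrite /= exy; case/andP: p_ys1.
by rewrite active_tail_cons act_x.
Qed.

End Ancestors.
End ActiveWalks.

Section DeletedEdgesOutOfB.
Variables (T : finType) (E : rel T) (B C : {set T}).
Let EB := [rel i j | E i j && (i \notin B)].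
Let AnC := anc E C :|: C.

Lemma directed_path_active x bin p :
  path E x p -> last x p \in B -> x \notin anc E C ->
  exists s, [/\ is_walk EB x s, walk_end x s \in B & active_tail C AnC bin x s].
Proof.
elim: p x bin => [|y p IH] x bin /=; first by move=> _ xB _; exists [::].
case/andP=> Exy p_y end_B x_nanc.
have [xB | x_nB] := boolP (x \in B); first by exists [::].
have y_nanc : y \notin anc E C by apply: contra x_nanc; apply: anc_edge.
have [s [w_ys end_s act_ys]] := IH y true p_y end_B y_nanc.
exists ((true, y) :: s); split=> //=; first by rewrite Exy x_nB.
rewrite active_tail_cons act_ys andbT /active_node andbF.
by apply: contra x_nanc; apply: mem_anc.
Qed.

(* A collider that is an ancestor of B but not of C is replaced by a directed
   path from it into B, cut at its first node in B. *)
Lemma active_walk_condition_on_C x bin s :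
  is_walk EB x s -> walk_end x s \in B ->
  active_tail (B :|: C) (anc E (B :|: C)) bin x s ->
  exists s', [/\ is_walk EB x s', walk_end x s' \in B & active_tail C AnC bin x s'].
Proof.
elim: s x bin => [|[b y] s IH] x bin; first by move=> _ xB _; exists [::].
move=> /= /andP[EBxy w_ys] end_B; rewrite active_tail_cons => /andP[act_x act_ys].
have [s1 [w_ys1 end_B1 act_ys1]] := IH y b w_ys end_B act_ys.
have [act_x' | inact_x] := boolP (active_node C AnC bin b x).
  by exists ((b, y) :: s1); split=> //=; rewrite ?EBxy // active_tail_cons act_x'.
have [xB | x_nB] := boolP (x \in B); first by exists [::].
move: act_x inact_x; rewrite /active_node; case: (bin && ~~ b); last first.
  by rewrite !inE negb_or => /andP[_ ->].
move=> x_anc; rewrite inE negb_or => /andP[x_nanc _].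
move: x_anc; rewrite inE => /existsP[c /andP[]]; rewrite inE => /orP[cB | cC] x_c.
  by case/connectP: x_c => p p_x c_end; apply: directed_path_active p_x _ x_nanc; rewrite -c_end.
by rewrite (anc_connect x_c (mem_anc E cC)) in x_nanc.
Qed.

End DeletedEdgesOutOfB.

Section UnrolledWalks.
Variables (N : finType) (W : {set N}) (tp : nat).
Variables (E Tl : rel N) (G : rel (node N tp)) (B C : {set N}) (t : nat).
Hypothesis G_proj : forall u v, G u v -> E u.1 v.1.
Hypothesis G_same_time : forall u v, G u v -> val u.2 = val v.2 -> Tl u.1 v.1.
Hypothesis G_forward :
  forall u v, G u v -> [&& valid W u, valid W v & val u.2 <= val v.2].
Hypothesis t_gt0 : 0 < t.
Hypothesis no_tail_into_B : forall i j, j \in B -> ~~ Tl i j.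

Let Z := barnu W tp t.-1 (B :|: C).
Let AnZ := anc G Z :|: Z.
Let EB := [rel i j | E i j && (i \notin B)].

Lemma leq_pred_ltn n : (n <= t.-1) = (n < t).
Proof. by rewrite -ltnS prednK. Qed.

Lemma G_time u v : G u v -> val u.2 <= val v.2.
Proof. by case/G_forward/and3P. Qed.

Lemma connect_time u v : connect G u v -> val u.2 <= val v.2.
Proof.
case/connectP=> p; elim: p u => [|w p IH] u /=; first by move=> _ ->.
by case/andP=> /G_time uw /IH wv /wv; apply: leq_trans.
Qed.

Lemma connect_proj u v : connect G u v -> connect E u.1 v.1.
Proof.
case/connectP=> p; elim: p u => [|w p IH] u /=; first by move=> _ ->.
by case/andP=> /G_proj/connect1 uw /IH wv /wv; apply: connect_trans.
Qed.

Lemma AnZ_early u : u \in AnZ -> val u.2 < t.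
Proof.
have Z_early v : v \in Z -> val v.2 < t by rewrite inE -leq_pred_ltn => /and3P[].
rewrite inE => /orP[|/Z_early//]; rewrite inE => /existsP[z /andP[/Z_early]].
by move=> z_early /connect_time /leq_ltn_trans; apply.
Qed.

Lemma AnZ_proj u : u \in AnZ -> u.1 \in anc E (B :|: C).
Proof.
rewrite inE => /orP[|]; last by rewrite inE => /and3P[/(mem_anc E)].
rewrite inE => /existsP[z /andP[z_Z /connect_proj u_z]].
by apply: anc_connect u_z _; apply: mem_anc; move: z_Z; rewrite inE => /and3P[].
Qed.

Lemma active_node_proj bin b u :
  val u.2 < t -> valid W u -> active_node Z AnZ bin b u ->
  active_node (B :|: C) (anc E (B :|: C)) bin b u.1.
Proof.
move=> u_early u_valid; rewrite /active_node; case: ifP => _; first exact: AnZ_proj.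
by apply: contra => u_BC; rewrite inE u_BC leq_pred_ltn u_early u_valid.
Qed.

(* Entered forward at a time >= t, an active walk can only move forward, as a
   collider there would not be an ancestor of Z; so it could reach nu_t^B
   only through a contemporaneous edge. *)
Lemma late_active_walk_nil y s : t <= val y.2 -> is_walk G y s ->
  active_tail Z AnZ true y s -> walk_end y s \in nu W tp t B -> s = [::].
Proof.
elim: s y => [//|[b z] s IH] y y_late /=; rewrite active_tail_cons.
case: b => /andP[Gyz w_zs] /andP[act_y act_zs] end_B; last first.
  by move: act_y; rewrite /active_node /= => /AnZ_early; rewrite ltnNge y_late.
have z_late := leq_trans y_late (G_time Gyz).
have s_nil := IH z z_late w_zs act_zs end_B; subst s.
move: end_B; rewrite inE => /and3P[zB /eqP z_t _].
have same_time : val y.2 = val z.2 by apply/eqP; rewrite eqn_leq G_time // z_t.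
by move: (no_tail_into_B y.1 zB); rewrite G_same_time.
Qed.

Lemma active_walk_project x bin s :
  is_walk G x s -> active_tail Z AnZ bin x s -> walk_end x s \in nu W tp t B ->
  val x.2 < t -> valid W x ->
  [/\ is_walk EB x.1 (map_walk fst s), walk_end x.1 (map_walk fst s) \in B &
      active_tail (B :|: C) (anc E (B :|: C)) bin x.1 (map_walk fst s)].
Proof.
elim: s x bin => [|[b y] s IH] x bin.
  by move=> _ _; rewrite inE => /and3P[_ /eqP-> _]; rewrite ltnn.
move=> /= /andP[Gxy w_ys] act_xs end_B x_early x_valid.
rewrite active_tail_cons in act_xs; case/andP: act_xs => act_x act_ys.
have {act_x}act_x' := active_node_proj x_early x_valid act_x.
have y_valid : valid W y by case: (b) Gxy => /G_forward/and3P[].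
rewrite active_tail_cons act_x' /=.
case: s => [|[b2 z] s] in IH w_ys act_ys end_B *.
  move: end_B; rewrite /walk_end /= inE => /and3P[yB /eqP y_t _] {act_ys}.
  case: b Gxy act_x' => [Gxy | /G_time]; last by rewrite y_t leqNgt x_early.
  rewrite active_noncollider ?andbF // inE negb_or => /andP[x_nB _].
  by rewrite (G_proj Gxy) x_nB.
have y_early : val y.2 < t.
  case: (b) Gxy act_ys => [Gxy act_ys | /G_time y_x _]; last exact: leq_ltn_trans y_x x_early.
  rewrite ltnNge; apply/negP => y_late.
  by have := late_active_walk_nil y_late w_ys act_ys end_B.
have [w_proj end_proj act_proj] := IH y b w_ys act_ys end_B y_early y_valid.
split=> //; rewrite w_proj andbT.
case: (b) Gxy act_x' act_ys => Gxy act_x' act_ys.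
  move: act_x'; rewrite active_noncollider ?andbF // inE negb_or => /andP[x_nB _].
  by rewrite (G_proj Gxy) x_nB.
move: act_ys; rewrite active_tail_cons => /andP[/(active_node_proj y_early y_valid)].
by rewrite active_noncollider // inE negb_or (G_proj Gxy) => /andP[-> _].
Qed.

End UnrolledWalks.

Section ProperPairs.
Variables (N : finType) (W : {set N}) (tp : nat).
Variables (E Tl : rel N) (G : rel (node N tp)).
Hypothesis DG : proper_pair W E Tl G.

Lemma proper_pair_edge u v : G u v -> E u.1 v.1.
Proof.
case: DG => -[Tl_E _] [_ G_fwd] _ G_D; case: u v => [i s] [j s'] /= G_uv.
case: G_D => [rolled_G | unrolled_G].
  rewrite (proj1 (rolled_G i j)); apply/existsP; exists s; apply/existsP; exists s'.
  by rewrite G_uv andbT; case/and3P: (G_fwd _ _ G_uv).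
by move: G_uv; rewrite unrolled_G => /and3P[_ _ /orP[/andP[_ //]|/andP[_ /Tl_E]]].
Qed.

Lemma proper_pair_same_time u v : G u v -> val u.2 = val v.2 -> Tl u.1 v.1.
Proof.
case: DG => _ _ _ G_D; case: u v => [i s] [j s'] /= G_uv /val_inj s_s'; subst s'.
case: G_D => [rolled_G | unrolled_G].
  by rewrite (proj2 (rolled_G i j)); apply/existsP; exists s.
by move: G_uv; rewrite unrolled_G ltnn eqxx => /and3P[].
Qed.

End ProperPairs.

Theorem corollary2 (N : finType) (W : {set N}) (tp : nat)
  (E Tl : rel N) (G : rel (node N tp)) (A B C : {set N}) :
  proper_pair W E Tl G ->
  [disjoint B & W] ->
  [disjoint A & B] -> [disjoint A & C] -> [disjoint B & C] ->
  (forall i j : N, j \in B -> ~~ Tl i j) ->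
  delta_separated E A B C ->
  forall t : nat, 0 < t <= tp ->
    d_separated G (barnu W tp t.-1 A) (nu W tp t B) (barnu W tp t.-1 (B :|: C)).
Proof.
move=> DG _ disj_AB disj_AC _ no_tail_into_B dsep t /andP[t_gt0 _] x s.
case/andP=> w_xs _; rewrite inE (leq_pred_ltn t_gt0) => /and3P[xA x_early x_valid] end_B.
have [_ [_ G_fwd] _ _] := DG.
have x_nC : x.1 \notin C by rewrite (disjointFr disj_AC xA).
have x_nBC : x.1 \notin B :|: C by rewrite inE negb_or (disjointFr disj_AB xA).
apply: contraT; rewrite -(active_tail_start _ s); last by rewrite inE (negbTE x_nBC).
move/(active_walk_project (proper_pair_edge DG) (proper_pair_same_time DG) G_fwd
        t_gt0 no_tail_into_B w_xs).
case/(_ end_B x_early x_valid) => w1 end1 act1.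
have [s2 [w2 end2 act2]] := active_walk_condition_on_C w1 end1 act1.
have EB_E : subrel [rel i j | E i j && (i \notin B)] E by move=> i j /andP[].
have [s3 [p3 end3 act3]] := active_path_of_walk EB_E w2 end2 act2.
by move: act3; rewrite active_tail_start // (dsep _ _ p3 xA end3).
Qed.
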